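(* In the setting described in the context, the elements $1$, $\rho$, $\gamma_j$ ($1\le j\le 6n+1$), $\delta_A$, $\delta_{B,j}^{\pm}$ ($1\le j\le 3n$) and $\delta_{C,j}^{\pm}$ ($1\le j\le 6n+1$) of $K$ are all totally positive.
   Context: For integers $m\ge0$ define integers $x_m,y_m$ by $\frac{x_m+y_m\sqrt5}{2}=\big(\frac{1+\sqrt5}{2}\big)^m$. Let $n\ge0$ be an integer such that $p:=y_{12n+3}^2-1$ and $r:=x_{12n+3}^2-1$ are squarefree, and let $K=\mathbb{Q}(\sqrt5,\sqrt p)$ (note $r=5p$, so $\sqrt r\in K$). Write $X=x_{12n+3}$, $Y=y_{12n+3}$, and $[a,b,c,d]:=a+b\sqrt5+c\sqrt p+d\sqrt r$. Define $\rho:=[\frac{X+Y}{2},0,-\frac12,\frac12]$; for $1\le j\le 6n+1$, $\gamma_j:=[\frac{y_{2j-1}X+1}{2},\frac{x_{2j-1}X-(-1)^j}{10},(-1)^j\frac{x_{2j-1}}{2},(-1)^j\frac{y_{2j-1}}{2}]$; and \[ \delta_A:=\Big[\tfrac14,-\tfrac1{20},0,-\tfrac{1}{5(X+Y)}\Big],\quad \delta_{B,j}^{\pm}:=\Big[\tfrac14,-\tfrac1{20},\pm\tfrac{X-x_{4j-1}}{20p},\mp\tfrac{X-y_{4j-1}}{4r}\Big]\ (1\le j\le 3n), \] \[ \delta_{C,j}^{\pm}:=\Big[\tfrac14,\pm\tfrac1{20},-\tfrac{Y-y_{2j-1}}{4p},\mp\tfrac{Y-x_{2j-1}}{4r}\Big]\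 (1\le j\le 6n+1). \] An element is totally positive if all four of its real conjugates are positive. *)

From Stdlib Require Import Reals ZArith Lia Lra.
Open Scope R_scope.

(* x_m, y_m : the integers with (x_m + y_m sqrt5)/2 = ((1+sqrt5)/2)^m.
   Multiplying (x + y sqrt5)/2 by (1+sqrt5)/2 gives
   ((x+5y)/2 + ((x+y)/2) sqrt5)/2, whence the recursion below
   (the divisions are exact; see lemma xy_spec). *)
Fixpoint xy (m : nat) : Z * Z :=
  match m with
  | O => (2%Z, 0%Z)
  | S k => let (x, y) := xy k in (((x + 5 * y) / 2)%Z, ((x + y) / 2)%Z)
  end.

Definition xs (m : nat) : Z := fst (xy m).
Definition ys (m : nat) : Z := snd (xy m).

Lemma xy_par : forall m, exists k, (xs m + ys m = 2 * k)%Z.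
Proof.
  unfold xs, ys; induction m as [|m IH].
  - exists 1%Z; reflexivity.
  - cbn [xy]. destruct (xy m) as [x y]; cbn [fst snd] in *. destruct IH as [k Hk].
    assert (Hx : (x + 5 * y = 2 * (k + 2 * y))%Z) by lia.
    rewrite Hx, Hk, !(Z.mul_comm 2), !Z.div_mul by lia.
    exists (k + y)%Z; lia.
Qed.

Lemma xy_spec : forall m,
  (IZR (xs m) + IZR (ys m) * sqrt 5) / 2 = ((1 + sqrt 5) / 2) ^ m.
Proof.
  intro m; induction m as [|m IH].
  - unfold xs, ys; simpl; lra.
  - destruct (xy_par m) as [k Hk].
    cbn [pow]. rewrite <- IH. unfold xs, ys in *. cbn [xy].
    destruct (xy m) as [x y]; cbn [fst snd] in *.
    assert (Hx : (x + 5 * y = 2 * (k + 2 * y))%Z) by lia.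
    rewrite Hx, Hk, !(Z.mul_comm 2), !Z.div_mul by lia.
    assert (H5 : sqrt 5 * sqrt 5 = 5) by (apply sqrt_sqrt; lra).
    apply (f_equal IZR) in Hk. rewrite plus_IZR, mult_IZR in Hk.
    rewrite plus_IZR, mult_IZR. simpl IZR in *.
    replace (IZR x) with (2 * IZR k - IZR y) by lra.
    set (q := sqrt 5) in *.
    transitivity ((IZR k + 2 * IZR y) / 2 + IZR k / 2 * q); [field|].
    transitivity ((1 + q) / 2 * ((2 * IZR k - IZR y + IZR y * q) / 2)
                  - IZR y * (q * q - 5) / 4); [field | rewrite H5; field].
Qed.

Definition squarefree (z : Z) : Prop :=
  forall d : Z, (d * d | z)%Z -> Z.abs d = 1%Z.

Definition Xn (n : nat) : Z := xs (12 * n + 3).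
Definition Yn (n : nat) : Z := ys (12 * n + 3).
Definition pn (n : nat) : Z := (Yn n ^ 2 - 1)%Z.
Definition rn (n : nat) : Z := (Xn n ^ 2 - 1)%Z.

(* An element [a,b,c,d] = a + b sqrt5 + c sqrt p + d sqrt r of
   K = Q(sqrt5, sqrt p), with sqrt r = sqrt5 * sqrt p (r = 5p).
   Coordinates are given as real numbers (they are rational). *)
Record elt := mkElt { ea : R; eb : R; ec : R; ed : R }.

Definition sgn (b : bool) : R := if b then 1 else -1.

(* The four real embeddings of K: sqrt5 |-> s sqrt5, sqrt p |-> t sqrt p,
   hence sqrt r = sqrt5 sqrt p |-> s t sqrt r. *)
Definition embed (p r : Z) (s t : bool) (e : elt) : R :=
  ea e + sgn s * eb e * sqrt 5 + sgn t * ec e * sqrt (IZR p)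
       + sgn s * sgn t * ed e * sqrt (IZR r).

Definition totally_positive (p r : Z) (e : elt) : Prop :=
  forall s t : bool, 0 < embed p r s t e.

Definition one_elt : elt := mkElt 1 0 0 0.

Definition rho (n : nat) : elt :=
  mkElt ((IZR (Xn n) + IZR (Yn n)) / 2) 0 (- (1 / 2)) (1 / 2).

Definition gamma (n j : nat) : elt :=
  let X := IZR (Xn n) in
  let x := IZR (xs (2 * j - 1)) in
  let y := IZR (ys (2 * j - 1)) in
  mkElt ((y * X + 1) / 2) ((x * X - (-1) ^ j) / 10)
        ((-1) ^ j * x / 2) ((-1) ^ j * y / 2).

Definition deltaA (n : nat) : elt :=
  mkElt (1 / 4) (- (1 / 20)) 0 (- (1 / (5 * (IZR (Xn n) + IZR (Yn n))))).

(* sign e = true for the "+" version, false for "-" *)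
Definition deltaB (n j : nat) (e : bool) : elt :=
  let X := IZR (Xn n) in
  mkElt (1 / 4) (- (1 / 20))
        (sgn e * ((X - IZR (xs (4 * j - 1))) / (20 * IZR (pn n))))
        (- sgn e * ((X - IZR (ys (4 * j - 1))) / (4 * IZR (rn n)))).

Definition deltaC (n j : nat) (e : bool) : elt :=
  let Y := IZR (Yn n) in
  mkElt (1 / 4) (sgn e * (1 / 20))
        (- ((Y - IZR (ys (2 * j - 1))) / (4 * IZR (pn n))))
        (- sgn e * ((Y - IZR (xs (2 * j - 1))) / (4 * IZR (rn n)))).

From Stdlib Require Import Reals ZArith Lia Lra Nsatz.
Open Scope R_scope.

(* With [phi = (1 + sqrt 5) / 2], Binet's formulas for odd [m] read
   [x_m = phi^m - phi^-m] and [sqrt 5 y_m = phi^m + phi^-m].  For [A = phi^(12n+3)]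
   this gives [X^2 - 1 = 5 (Y^2 - 1)], so [r = 5 p] and both [(X, sqrt r)] and
   [(Y, sqrt p)] lie on the hyperbola [Z^2 - w^2 = 1].  Under each real embedding,
   [rho], [gamma_j] and [delta_A] become sums of terms that are positive because
   [w < Z] there, while a positive multiple of [delta_B] or [delta_C] becomes
   [w +- (Z - c)] with [c] one of [phi^(m-1)], [phi^(1-m)].  Since
   [Z - w = 1 / (Z + w)], both lie in the window [Z - w < c < Z + w] as soon as
   [phi <= phi^m < phi Z], and the bounds on [j] guarantee exactly that. *)

Lemma sqrt5_sq : sqrt 5 * sqrt 5 = 5.
Proof. apply sqrt_sqrt; lra. Qed.

Lemma sqrt5_mul_sq a : (sqrt 5 * a) * (sqrt 5 * a) = 5 * (a * a).
Proof. rewrite <- sqrt5_sq at 3; ring. Qed.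

Lemma sqrt5_bounds : 2 < sqrt 5 < 3.
Proof.
  pose proof sqrt5_sq. assert (0 < sqrt 5) by (apply sqrt_lt_R0; lra).
  split; nra.
Qed.

Definition phi : R := (1 + sqrt 5) / 2.

Lemma phi_gt1 : 1 < phi.
Proof. unfold phi; pose proof sqrt5_bounds; lra. Qed.

Lemma phi_pos : 0 < phi.
Proof. pose proof phi_gt1; lra. Qed.

Lemma phi_cube : phi ^ 3 = 2 + sqrt 5.
Proof. unfold phi; pose proof sqrt5_sq; field_simplify_eq; cbn [pow]; nsatz. Qed.

Lemma xy_succ m :
  2 * IZR (xs (S m)) = IZR (xs m) + 5 * IZR (ys m) /\
  2 * IZR (ys (S m)) = IZR (xs m) + IZR (ys m).
Proof.
  destruct (xy_par m) as [k Hk]. unfold xs, ys in *; cbn [xy].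
  destruct (xy m) as [x y]; cbn [fst snd] in *.
  replace (x + 5 * y)%Z with ((k + 2 * y) * 2)%Z by lia.
  rewrite Hk, (Z.mul_comm 2 k), !Z.div_mul by lia.
  rewrite <- !mult_IZR, <- !plus_IZR. split; f_equal; lia.
Qed.

Lemma xy_conj_spec m :
  (IZR (xs m) - IZR (ys m) * sqrt 5) / 2 = ((1 - sqrt 5) / 2) ^ m.
Proof.
  induction m as [|m IH].
  - unfold xs, ys; simpl; lra.
  - destruct (xy_succ m) as [Hx Hy]. pose proof sqrt5_sq.
    cbn [pow]; rewrite <- IH. field_simplify_eq. cbn [pow]. nsatz.
Qed.

(* [B] plays the role of [phi ^ m], and then [(x, y) = (x_m, y_m)] for odd [m]. *)
Definition binet (B x y : R) : Prop := x = B - / B /\ y * sqrt 5 = B + / B.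

Lemma binet_odd m : Nat.Odd m -> binet (phi ^ m) (IZR (xs m)) (IZR (ys m)).
Proof.
  intros [i ->].
  assert (Hconj : (1 - sqrt 5) / 2 = -1 * / phi).
  { pose proof phi_gt1. apply (Rmult_eq_reg_r phi); [|lra].
    rewrite Rmult_assoc, Rinv_l by lra. unfold phi; pose proof sqrt5_sq; nra. }
  pose proof (xy_spec (2 * i + 1)) as Hsum. pose proof (xy_conj_spec (2 * i + 1)) as Hdiff.
  rewrite Hconj, Rpow_mult_distr, pow_inv, Nat.add_1_r, pow_1_odd in Hdiff.
  rewrite <- Nat.add_1_r in Hdiff. fold phi in Hsum. split; lra.
Qed.

Lemma binet_cleared {B x y : R} :
  0 < B -> binet B x y -> x * B = B * B - 1 /\ y * sqrt 5 * B = B * B + 1.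
Proof. intros HB [-> Hy]; split; [|rewrite Hy]; field; lra. Qed.

Lemma lt_of_sq_eq_sq_add1 (w Z : R) : 0 <= w -> 0 < Z -> Z * Z = w * w + 1 -> w < Z.
Proof. intros; nra. Qed.

Lemma pell_window (Z w k B : R) :
  0 < w -> 0 < Z -> Z * Z = w * w + 1 -> 0 < k -> k <= B -> B < k * (Z + w) ->
  (Z - w < B / k < Z + w) /\ (Z - w < k / B < Z + w).
Proof.
  intros Hw HZ HZw Hk HkB HBk.
  assert (Hprod : (Z - w) * (Z + w) = 1) by nra.
  assert (Hlt1 : Z - w < 1) by nra.
  assert (HB : B / k * k = B) by (field; lra).
  assert (HB' : k / B * B = k) by (field; lra).
  assert (1 <= B / k) by nra.
  assert (B / k < Z + w) by nra.
  assert (k / B <= 1) by nra.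
  assert (B * (Z - w) < k) by nra.
  assert (Z - w < k / B) by nra.
  lra.
Qed.

(* [embed p r] with [sqrt p] abstracted to [q] and [sqrt r] written as [sqrt 5 * q]. *)
Definition embedding (q : R) (s t : bool) (a b c d : R) : R :=
  a + sgn s * b * sqrt 5 + sgn t * c * q + sgn s * sgn t * d * (sqrt 5 * q).

Lemma embedding_gamma q X x y B e s t :
  0 < B -> binet B x y ->
  10 * embedding q s t ((y * X + 1) / 2) ((x * X - sgn e) / 10)
                       (sgn e * x / 2) (sgn e * y / 2)
  = 2 * (if s then B else / B) * (sqrt 5 * X + sgn s * sgn t * sgn e * (5 * q))
    + (5 - sgn s * sgn e * sqrt 5).
Proof.
  intros HB Hxy. destruct (binet_cleared HB Hxy) as [Hx Hy]; clear Hxy.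
  unfold embedding; destruct s; cbn [sgn]; field_simplify_eq; try lra.
  all: cbn [pow]; pose proof sqrt5_sq; nsatz.
Qed.

Lemma embedding_deltaB q X x y B e s t :
  0 < q -> 0 < B -> binet B x y ->
  20 * q * embedding q s t (1 / 4) (- (1 / 20))
             (sgn e * ((X - x) / (20 * (q * q))))
             (- sgn e * ((X - y) / (4 * (5 * (q * q)))))
  = if s then (sqrt 5 - 1) * (sqrt 5 * q - sgn t * sgn e * (X - phi / B))
    else (sqrt 5 + 1) * (sqrt 5 * q + sgn t * sgn e * (X - B / phi)).
Proof.
  intros Hq HB Hxy. destruct (binet_cleared HB Hxy) as [Hx Hy]; clear Hxy.
  pose proof sqrt5_bounds.
  unfold embedding, phi; destruct s; cbn [sgn]; field_simplify_eq; try lra.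
  all: cbn [pow]; clear -Hx Hy; pose proof sqrt5_sq; nsatz.
Qed.

Lemma embedding_deltaC q Y x y B e s t :
  0 < q -> 0 < B -> binet B x y ->
  20 * q * embedding q s t (1 / 4) (sgn e * (1 / 20))
             (- ((Y - y) / (4 * (q * q))))
             (- sgn e * ((Y - x) / (4 * (5 * (q * q)))))
  = if Bool.eqb s e then sqrt 5 * (sqrt 5 + 1) * (q - sgn t * (Y - B / phi))
    else sqrt 5 * (sqrt 5 - 1) * (q - sgn t * (Y - phi / B)).
Proof.
  intros Hq HB Hxy. destruct (binet_cleared HB Hxy) as [Hx Hy]; clear Hxy.
  pose proof sqrt5_bounds.
  unfold embedding, phi; destruct s, e; cbn [sgn Bool.eqb]; field_simplify_eq; try lra.
  all: cbn [pow]; clear -Hx Hy; pose proof sqrt5_sq; nsatz.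
Qed.

Section Positivity.

Variables q X Y : R.
Hypothesis q_pos : 0 < q.
Hypothesis X_pos : 0 < X.
Hypothesis Y_pos : 0 < Y.
Hypothesis X_pell : X * X = 5 * (q * q) + 1.
Hypothesis Y_pell : Y * Y = q * q + 1.

Lemma sqrt5_q_pos : 0 < sqrt 5 * q.
Proof. pose proof sqrt5_bounds; nra. Qed.

Lemma X_pell_sqrt5 : X * X = (sqrt 5 * q) * (sqrt 5 * q) + 1.
Proof. rewrite sqrt5_mul_sq; exact X_pell. Qed.

Lemma sqrt5_q_lt_X : sqrt 5 * q < X.
Proof.
  apply lt_of_sq_eq_sq_add1; [|exact X_pos|exact X_pell_sqrt5].
  apply Rlt_le, sqrt5_q_pos.
Qed.

Lemma q_lt_Y : q < Y.
Proof. apply lt_of_sq_eq_sq_add1; [lra|exact Y_pos|exact Y_pell]. Qed.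

Lemma X_lt_sqrt5_Y : X < sqrt 5 * Y.
Proof.
  pose proof sqrt5_bounds; pose proof (sqrt5_mul_sq Y).
  assert (0 < sqrt 5 * Y) by nra.
  nra.
Qed.

Lemma rho_embedding_pos s t : 0 < embedding q s t ((X + Y) / 2) 0 (- (1 / 2)) (1 / 2).
Proof.
  pose proof sqrt5_q_lt_X; pose proof q_lt_Y; pose proof sqrt5_q_pos.
  unfold embedding; destruct s, t; cbn [sgn]; lra.
Qed.

Lemma gamma_embedding_pos x y B e s t :
  0 < B -> binet B x y ->
  0 < embedding q s t ((y * X + 1) / 2) ((x * X - sgn e) / 10)
                      (sgn e * x / 2) (sgn e * y / 2).
Proof.
  intros HB Hxy.
  pose proof sqrt5_q_lt_X; pose proof sqrt5_bounds; pose proof sqrt5_sq.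
  assert (H5q : 5 * q < sqrt 5 * X) by nra.
  apply (Rmult_lt_reg_l 10); [lra|].
  rewrite Rmult_0_r, (embedding_gamma q X x y B) by assumption.
  apply Rplus_lt_0_compat.
  - apply Rmult_lt_0_compat.
    + destruct s; [lra|]. apply Rmult_lt_0_compat; [lra|]. now apply Rinv_0_lt_compat.
    + destruct s, t, e; cbn [sgn]; lra.
  - destruct s, e; cbn [sgn]; lra.
Qed.

Lemma deltaA_embedding_pos s t :
  0 < embedding q s t (1 / 4) (- (1 / 20)) 0 (- (1 / (5 * (X + Y)))).
Proof.
  pose proof sqrt5_q_lt_X; pose proof X_lt_sqrt5_Y; pose proof sqrt5_q_pos.
  pose proof sqrt5_bounds; pose proof sqrt5_sq.
  (* Tight up to [X - sqrt 5 * q]: [(5 - sqrt 5) (1 + / sqrt 5) = 4]. *)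
  assert (Hkey : sqrt 5 * q / (5 * (X + Y)) < (5 - sqrt 5) / 20).
  { apply (Rmult_lt_reg_r (20 * (X + Y))); [lra|].
    unfold Rdiv; field_simplify; [|lra]. nra. }
  assert (0 < sqrt 5 * q / (5 * (X + Y))) by (apply Rdiv_lt_0_compat; lra).
  unfold embedding; destruct s, t; cbn [sgn]; lra.
Qed.

Lemma deltaB_embedding_pos x y B e s t :
  phi <= B -> B < phi * X -> binet B x y ->
  0 < embedding q s t (1 / 4) (- (1 / 20))
        (sgn e * ((X - x) / (20 * (q * q))))
        (- sgn e * ((X - y) / (4 * (5 * (q * q))))).
Proof.
  intros HB1 HB2 Hxy. pose proof phi_gt1; pose proof sqrt5_bounds; pose proof sqrt5_q_pos.
  assert (HB3 : B < phi * (X + sqrt 5 * q)) by nra.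
  pose proof (pell_window X (sqrt 5 * q) phi B sqrt5_q_pos X_pos X_pell_sqrt5 phi_pos HB1 HB3)
    as [Hdiv Hinv].
  apply (Rmult_lt_reg_l (20 * q)); [lra|].
  rewrite Rmult_0_r, (embedding_deltaB q X x y B) by (auto; lra).
  destruct s; apply Rmult_lt_0_compat; try lra; destruct t, e; cbn [sgn]; lra.
Qed.

Lemma deltaC_embedding_pos x y B e s t :
  phi <= B -> B < phi * Y -> binet B x y ->
  0 < embedding q s t (1 / 4) (sgn e * (1 / 20))
        (- ((Y - y) / (4 * (q * q))))
        (- sgn e * ((Y - x) / (4 * (5 * (q * q))))).
Proof.
  intros HB1 HB2 Hxy. pose proof phi_gt1; pose proof sqrt5_bounds.
  assert (HB3 : B < phi * (Y + q)) by nra.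
  pose proof (pell_window Y q phi B q_pos Y_pos Y_pell phi_pos HB1 HB3) as [Hdiv Hinv].
  apply (Rmult_lt_reg_l (20 * q)); [lra|].
  rewrite Rmult_0_r, (embedding_deltaC q Y x y B) by (auto; lra).
  destruct (Bool.eqb s e); apply Rmult_lt_0_compat; try nra; destruct t; cbn [sgn]; lra.
Qed.

End Positivity.

Lemma pow_neg1_sgn j : (-1) ^ j = sgn (Nat.even j).
Proof.
  induction j as [|j IH]; [reflexivity|].
  rewrite Nat.even_succ, <- Nat.negb_even, <- tech_pow_Rmult, IH.
  destruct (Nat.even j); cbn [sgn negb]; ring.
Qed.

Section Setting.

Variable n : nat.

Let A := phi ^ (12 * n + 3).
Let X := IZR (Xn n).
Let Y := IZR (Yn n).

Lemma binet_Xn_Yn : binet A X Y.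
Proof. apply binet_odd. exists (6 * n + 1)%nat; lia. Qed.

Lemma A_ge : 2 + sqrt 5 <= A.
Proof. rewrite <- phi_cube. apply Rle_pow; [apply Rlt_le, phi_gt1 | lia]. Qed.

Lemma inv_A_bounds : 0 < / A < / 4.
Proof.
  pose proof A_ge; pose proof sqrt5_bounds.
  split; [apply Rinv_0_lt_compat | apply Rinv_0_lt_contravar]; lra.
Qed.

Lemma Xn_pos : 0 < X.
Proof.
  destruct binet_Xn_Yn as [HX _]. pose proof A_ge; pose proof inv_A_bounds.
  pose proof sqrt5_bounds. lra.
Qed.

Lemma Yn_gt1 : 1 < Y.
Proof.
  destruct binet_Xn_Yn as [_ HY]. pose proof A_ge; pose proof inv_A_bounds.
  pose proof sqrt5_bounds. nra.
Qed.

Lemma Yn_pos : 0 < Y.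
Proof. pose proof Yn_gt1; lra. Qed.

Lemma Xn_sq : X * X = 5 * (Y * Y) - 4.
Proof.
  destruct binet_Xn_Yn as [HX HY]. pose proof A_ge; pose proof sqrt5_bounds.
  assert (HA : A * / A = 1) by (field; lra).
  rewrite <- sqrt5_mul_sq, (Rmult_comm (sqrt 5) Y), HX, HY. nra.
Qed.

Lemma pn_eq : IZR (pn n) = Y * Y - 1.
Proof. unfold pn. now rewrite minus_IZR, Z.pow_2_r, mult_IZR. Qed.

Lemma rn_eq : IZR (rn n) = 5 * IZR (pn n).
Proof.
  unfold rn. rewrite minus_IZR, Z.pow_2_r, mult_IZR, pn_eq.
  fold X; rewrite Xn_sq; ring.
Qed.

Lemma pn_pos : 0 < IZR (pn n).
Proof. rewrite pn_eq; pose proof Yn_gt1; nra. Qed.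

Let q := sqrt (IZR (pn n)).

Lemma q_pos : 0 < q.
Proof. apply sqrt_lt_R0, pn_pos. Qed.

Lemma q_sq : q * q = IZR (pn n).
Proof. apply sqrt_sqrt, Rlt_le, pn_pos. Qed.

Lemma Xn_pell : X * X = 5 * (q * q) + 1.
Proof. rewrite q_sq, pn_eq, Xn_sq; ring. Qed.

Lemma Yn_pell : Y * Y = q * q + 1.
Proof. rewrite q_sq, pn_eq; ring. Qed.

Local Hint Resolve q_pos Xn_pos Yn_pos Xn_pell Yn_pell : core.

Lemma embed_embedding s t (x : elt) :
  embed (pn n) (rn n) s t x = embedding q s t (ea x) (eb x) (ec x) (ed x).
Proof.
  unfold embed, embedding. rewrite rn_eq, sqrt_mult; [reflexivity | lra |].
  apply Rlt_le, pn_pos.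
Qed.

Lemma A_lt_phi_cube_mul : A < phi ^ 3 * X /\ A < phi ^ 3 * Y.
Proof.
  destruct binet_Xn_Yn as [HX HY]. pose proof A_ge; pose proof inv_A_bounds.
  pose proof sqrt5_bounds; pose proof Yn_gt1.
  rewrite phi_cube; split; nra.
Qed.

Lemma phi_pow_bounds m :
  (1 <= m)%nat -> (m + 2 <= 12 * n + 3)%nat ->
  phi <= phi ^ m /\ phi ^ m < phi * X /\ phi ^ m < phi * Y.
Proof.
  intros Hm1 Hm2. pose proof phi_gt1; pose proof A_lt_phi_cube_mul.
  assert (Hle : phi ^ (m + 2) <= A) by (apply Rle_pow; lra || lia).
  assert (Hcube : phi ^ m * phi ^ 3 = phi ^ (m + 2) * phi) by (rewrite pow_add; ring).
  assert (0 < phi ^ 3) by (apply pow_lt; lra).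
  split; [rewrite <- pow_1 at 1; apply Rle_pow; lra || lia |].
  split; nra.
Qed.

Lemma one_totally_positive : totally_positive (pn n) (rn n) one_elt.
Proof.
  intros s t; rewrite embed_embedding; unfold embedding; cbn.
  pose proof q_pos; pose proof sqrt5_bounds; lra.
Qed.

Lemma rho_totally_positive : totally_positive (pn n) (rn n) (rho n).
Proof. intros s t; rewrite embed_embedding; now apply rho_embedding_pos. Qed.

Lemma gamma_totally_positive j : (1 <= j)%nat -> totally_positive (pn n) (rn n) (gamma n j).
Proof.
  intros Hj s t; rewrite embed_embedding; cbn [gamma ea eb ec ed]; rewrite pow_neg1_sgn.
  assert (HB : 0 < phi ^ (2 * j - 1)) by (apply pow_lt, phi_pos).
  assert (Hxy := binet_odd (2 * j - 1) ltac:(exists (j - 1)%nat; lia)).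
  apply gamma_embedding_pos with (B := phi ^ (2 * j - 1)); auto.
Qed.

Lemma deltaA_totally_positive : totally_positive (pn n) (rn n) (deltaA n).
Proof. intros s t; rewrite embed_embedding; now apply deltaA_embedding_pos. Qed.

Lemma deltaB_totally_positive j e :
  (1 <= j <= 3 * n)%nat -> totally_positive (pn n) (rn n) (deltaB n j e).
Proof.
  intros Hj s t; rewrite embed_embedding; cbn [deltaB ea eb ec ed].
  rewrite rn_eq, <- q_sq.
  assert (Hxy := binet_odd (4 * j - 1) ltac:(exists (2 * j - 1)%nat; lia)).
  destruct (phi_pow_bounds (4 * j - 1)) as (HB1 & HB2 & _); [lia | lia |].
  apply deltaB_embedding_pos with (B := phi ^ (4 * j - 1)); auto.
Qed.

Lemma deltaC_totally_positive j e :
  (1 <= j <= 6 * n + 1)%nat -> totally_positive (pn n) (rn n) (deltaC n j e).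
Proof.
  intros Hj s t; rewrite embed_embedding; cbn [deltaC ea eb ec ed].
  rewrite rn_eq, <- q_sq.
  assert (Hxy := binet_odd (2 * j - 1) ltac:(exists (j - 1)%nat; lia)).
  destruct (phi_pow_bounds (2 * j - 1)) as (HB1 & _ & HB2); [lia | lia |].
  apply deltaC_embedding_pos with (B := phi ^ (2 * j - 1)); auto.
Qed.

End Setting.

Theorem proposition4p2 (n : nat) :
  squarefree (pn n) -> squarefree (rn n) ->
  let TP := totally_positive (pn n) (rn n) in
  TP one_elt /\
  TP (rho n) /\
  (forall j : nat, (1 <= j <= 6 * n + 1)%nat -> TP (gamma n j)) /\
  TP (deltaA n) /\
  (forall (j : nat) (e : bool), (1 <= j <= 3 * n)%nat -> TP (deltaB n j e)) /\
  (forall (j : nat) (e : bool), (1 <= j <= 6 * n + 1)%nat -> TP (deltaC n j e)).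
Proof.
  (* Squarefreeness only makes [K] a quartic field; positivity does not use it. *)
  intros _ _ TP; unfold TP.
  repeat split; intros.
  - apply one_totally_positive.
  - apply rho_totally_positive.
  - apply gamma_totally_positive; lia.
  - apply deltaA_totally_positive.
  - now apply deltaB_totally_positive.
  - now apply deltaC_totally_positive.
Qed.
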